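(* If $\delta>\frac{\pi^2}{4}-1$, then $F_1^{-1}(\alpha)>F_2(\alpha;\delta)$ for every $\alpha\in(0,1)$.
   Context: Real-valued maps: for $\alpha\in[0,1]$, $\sigma^2\ge0$ (with $\sigma=\sqrt{\sigma^2}$, $\arctan(\alpha/0)=\pi/2$ for $\alpha>0$), $\psi_2(\alpha,\sigma^2;\delta)=\frac1\delta\big[\alpha^2+\sigma^2+1-\frac{4\sigma}\pi-\frac{4\alpha}\pi\arctan(\alpha/\sigma)\big]$. For $\alpha\in(0,1)$ let $F_1^{-1}(\alpha):=\alpha^2\cot^2(\pi\alpha/2)$ (the value of $\sigma^2$ for which $\alpha$ is the positive fixed point of $\alpha\mapsto\frac2\pi\arctan(\alpha/\sigma)$). For $\delta>1$ and $\alpha\in[0,1]$, $F_2(\alpha;\delta)$ denotes the unique solution $\sigma^2\in[0,\infty)$ of $\sigma^2=\psi_2(\alpha,\sigma^2;\delta)$ (existence and uniqueness are known). *)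

From Stdlib Require Import Reals Lra ClassicalEpsilon.
Open Scope R_scope.

Definition atan_ratio (a s : R) : R :=
  if Req_EM_T s 0 then PI / 2 else atan (a / s).

Definition psi2 (alpha sigma2 delta : R) : R :=
  let sigma := sqrt sigma2 in
  / delta * (alpha ^ 2 + sigma2 + 1 - 4 * sigma / PI
             - 4 * alpha / PI * atan_ratio alpha sigma).

Definition F1inv (alpha : R) : R :=
  alpha ^ 2 * (/ tan (PI * alpha / 2)) ^ 2.

(* F_2(alpha; delta): the (unique) sigma^2 >= 0 with sigma^2 = psi2(alpha, sigma^2; delta),
   picked by Hilbert's epsilon (existence/uniqueness known for delta > 1, alpha in [0,1]). *)
Definition F2 (alpha delta : R) : R :=
  epsilon (inhabits 0) (fun s => 0 <= s /\ s = psi2 alpha s delta).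

From Stdlib Require Import Factorial Reals Lra Psatz Machin ClassicalEpsilon.
Open Scope R_scope.

(* Put [t = PI alpha / 2] and [sigma1 = alpha cot t], so that [F1inv alpha = sigma1^2]. For
   [sigma > 0], [sigma^2] is a fixed point of [psi2 alpha _ delta] iff [sigma] is a zero of
   [G = psi2_gap alpha (delta - 1)], and [G] is increasing because [atan] is 1-Lipschitz; so
   it suffices that [G sigma1 > 0]. Since [atan (cot t) = PI/2 - t], [(PI/2)^2 G sigma1] is
   [phi (PI/2) t (t cot t)] plus a term that is positive exactly when
   [delta > PI^2/4 - 1].
   The inequality [phi (PI/2) t (t cot t) >= 0] is tight at both ends of [(0, PI/2)], with a
   relative margin of only about 2%. It follows from [3.1414 < PI < 3.1416] and two rational
   lower bounds for [t cot t]: a Taylor polynomial for [t <= 1], and [t tan s] with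
   [tan s >= 3 s / (3 - s^2)], [s = PI/2 - t], for [t >= 1]; what remains are polynomial
   inequalities of degree at most four. *)

Lemma PI_bounds : 31414/10000 < PI < 31416/10000.
Proof.
  (* Machin's formula [PI/4 = 2 atan (1/3) + atan (1/7)], its alternating series cut after
     five and six terms. *)
  destruct (PI_2_3_7_ineq 2) as [Hlow Hup].
  unfold PI_2_3_7_tg, tg_alt, Ratan_seq in Hlow, Hup.
  cbn [sum_f_R0 Nat.mul Nat.add pow] in Hlow, Hup.
  rewrite ?S_INR in Hlow, Hup; simpl INR in Hlow, Hup.
  field_simplify in Hlow; field_simplify in Hup.
  split; lra.
Qed.

Lemma INR_fact_S n : INR (fact (S n)) = INR (S n) * INR (fact n).
Proof. rewrite fact_simpl, mult_INR; reflexivity. Qed.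

Ltac expand_taylor :=
  cbn [sum_f_R0 Nat.mul Nat.add]; rewrite ?INR_fact_S; cbn [fact];
  rewrite ?INR_IZR_INZ; cbv [Z.of_nat PosDef.Pos.of_succ_nat PosDef.Pos.succ];
  simpl pow; field.

Lemma sin_lb_eq a : sin_lb a = a - a^3/6 + a^5/120 - a^7/5040.
Proof. unfold sin_lb, sin_approx, sin_term; expand_taylor. Qed.

Lemma sin_ub_eq a : sin_ub a = a - a^3/6 + a^5/120 - a^7/5040 + a^9/362880.
Proof. unfold sin_ub, sin_approx, sin_term; expand_taylor. Qed.

Lemma cos_lb_eq a : cos_lb a = 1 - a^2/2 + a^4/24 - a^6/720.
Proof. unfold cos_lb, cos_approx, cos_term; expand_taylor. Qed.

Lemma cos_ub_eq a : cos_ub a = 1 - a^2/2 + a^4/24 - a^6/720 + a^8/40320.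
Proof. unfold cos_ub, cos_approx, cos_term; expand_taylor. Qed.

Lemma Rle_div_r a b c : 0 < c -> a * c <= b -> a <= b / c.
Proof.
  intros Hc H. apply (Rmult_le_reg_r c); [exact Hc|].
  unfold Rdiv; rewrite Rmult_assoc, Rinv_l, Rmult_1_r; lra.
Qed.

Lemma Rle_div_l a b c : 0 < c -> a <= b * c -> a / c <= b.
Proof.
  intros Hc H. apply (Rmult_le_reg_r c); [exact Hc|].
  unfold Rdiv; rewrite Rmult_assoc, Rinv_l, Rmult_1_r; lra.
Qed.

(* [3 s / (3 - s^2)] is the [1/2] Pade approximant of [tan s]. *)
Lemma tan_lower_bound s : 0 <= s <= 1 -> 3 * s * cos s <= (3 - s^2) * sin s.
Proof.
  intros Hs.
  assert (Hpi := PI_bounds).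
  destruct (SIN s ltac:(lra) ltac:(lra)) as [Hsin _].
  destruct (COS s ltac:(lra) ltac:(lra)) as [_ Hcos].
  rewrite sin_lb_eq in Hsin; rewrite cos_ub_eq in Hcos.
  assert (Hs2 : 0 <= s^2 <= 1) by (split; nra).
  assert (Hgap : (3 - s^2) * (s - s^3/6 + s^5/120 - s^7/5040)
                 - 3 * s * (1 - s^2/2 + s^4/24 - s^6/720 + s^8/40320)
                 = s^5 * (1/15 - s^2/210 + s^4/8064)) by field.
  assert (0 <= s^5) by (apply pow_le; lra).
  assert (0 <= 1/15 - s^2/210 + s^4/8064)
    by (assert (0 <= s^4) by (apply pow_le; lra); lra).
  assert (3 * s * cos s <= 3 * s * (1 - s^2/2 + s^4/24 - s^6/720 + s^8/40320))
    by (apply Rmult_le_compat_l; lra).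
  assert ((3 - s^2) * (s - s^3/6 + s^5/120 - s^7/5040) <= (3 - s^2) * sin s)
    by (apply Rmult_le_compat_l; lra).
  nra.
Qed.

(* [t cot t = 1 - t^2/3 - t^4/45 - ...] with all coefficients negative; raising [1/45] to
   [1/40] absorbs the tail on [0, 1], with an error of about [4e-4] at [t = 1]. *)
Lemma cot_lower_bound t : 0 <= t <= 1 -> (1 - t^2/3 - t^4/40) * sin t <= t * cos t.
Proof.
  intros Ht.
  assert (Hpi := PI_bounds).
  destruct (SIN t ltac:(lra) ltac:(lra)) as [_ Hsin].
  destruct (COS t ltac:(lra) ltac:(lra)) as [Hcos _].
  rewrite sin_ub_eq in Hsin; rewrite cos_lb_eq in Hcos.
  assert (Hgap : t * (1 - t^2/2 + t^4/24 - t^6/720)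
                 - (1 - t^2/3 - t^4/40) * (t - t^3/6 + t^5/120 - t^7/5040 + t^9/362880)
                 = t * (t^2)^2 * (1/360 - 13/5040 * t^2 + 253/1814400 * (t^2)^2
                                  - 11/2721600 * (t^2)^3 + 1/14515200 * (t^2)^4))
    by field.
  replace (t^4) with ((t^2)^2) in * by ring.
  set (u := t^2) in *.
  assert (Hu : 0 <= u <= 1) by (unfold u; split; nra).
  assert (0 <= t * u^2) by (apply Rmult_le_pos; [lra | apply pow_le; lra]).
  assert (0 <= u^2 <= 1) by (split; nra).
  assert (0 <= 1/360 - 13/5040 * u + 253/1814400 * u^2
               - 11/2721600 * u^3 + 1/14515200 * u^4).
  { assert (u^3 <= 1) by (rewrite <- (pow1 3); apply pow_incr; lra).
    assert (0 <= u^4) by (apply pow_le; lra).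
    lra. }
  assert (t * (1 - u/2 + u^2/24 - t^6/720) <= t * cos t)
    by (apply Rmult_le_compat_l; lra).
  assert ((1 - u/3 - u^2/40) * sin t
          <= (1 - u/3 - u^2/40) * (t - t^3/6 + t^5/120 - t^7/5040 + t^9/362880))
    by (apply Rmult_le_compat_l; lra).
  nra.
Qed.

Definition phi (h t x : R) : R := t^2 - h^2 + 2 * x + (h^2 - 2) * x^2.

Lemma phi_le_compat h t x y : 2 <= h^2 -> 0 <= y <= x -> phi h t y <= phi h t x.
Proof.
  intros Hh Hyx. unfold phi.
  assert (0 <= (h^2 - 2) * ((x - y) * (x + y))) by (apply Rmult_le_pos; nra).
  nra.
Qed.

(* Lets the unknown [PI/2] be replaced by a rational lower bound. *)
Lemma phi_complement_le h1 h2 s l :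
  2 <= h1^2 -> 0 <= s <= h1 -> h1 <= h2 -> s <= l ->
  phi h1 (h1 - s) ((h1 - s) * l) <= phi h2 (h2 - s) ((h2 - s) * l).
Proof.
  intros Hh1 Hs Hh Hl. unfold phi.
  assert ((h1^2 - 2) * (h1 - s)^2 <= (h2^2 - 2) * (h2 - s)^2)
    by (apply Rmult_le_compat; nra).
  assert (0 <= ((h2^2 - 2) * (h2 - s)^2 - (h1^2 - 2) * (h1 - s)^2) * l^2)
    by (apply Rmult_le_pos; [lra | nra]).
  nra.
Qed.

Lemma phi_cot_nonneg_small t : 0 < t <= 1 -> 0 <= phi (PI/2) t (t * cos t / sin t).
Proof.
  intros Ht.
  assert (Hpi := PI_bounds).
  assert (Hsin : 0 < sin t) by (apply sin_gt_0; lra).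
  assert (Hyx : 1 - t^2/3 - t^4/40 <= t * cos t / sin t)
    by (apply Rle_div_r; [exact Hsin | apply cot_lower_bound; lra]).
  replace (t^4) with ((t^2)^2) in Hyx by ring.
  set (u := t^2) in *.
  set (y := 1 - u/3 - u^2/40) in *.
  assert (Hu : 0 < u <= 1) by (unfold u; split; nra).
  assert (Hu2 : 0 <= u^2 <= 1) by (split; nra).
  assert (Hy : 0 <= y <= 1) by (unfold y; lra).
  apply Rle_trans with (phi (PI/2) t y); [| apply phi_le_compat; nra].
  (* [phi h t y] decreases in [h] as [y <= 1]. *)
  apply Rle_trans with (phi (15708/10000) t y).
  - assert (Hcubic : phi (15708/10000) t y
                     = u * (203671/9375000 - 24115381/1125000000 * u
                            + 2921329/375000000 * u^2 + 2921329/10000000000 * u^3))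
      by (unfold phi, y, u; field).
    rewrite Hcubic; apply Rmult_le_pos; [lra|].
    assert (0 <= u^3) by (apply pow_le; lra).
    lra.
  - unfold phi.
    assert (0 <= ((15708/10000)^2 - (PI/2)^2) * (1 - y^2)) by (apply Rmult_le_pos; nra).
    nra.
Qed.

Lemma phi_cot_nonneg_large t : 1 <= t < PI/2 -> 0 <= phi (PI/2) t (t * cos t / sin t).
Proof.
  intros Ht.
  assert (Hpi := PI_bounds).
  set (s := PI/2 - t).
  assert (Hs : 0 < s <= 5708/10000) by (unfold s; lra).
  replace t with (PI/2 - s) by (unfold s; ring).
  rewrite cos_shift, sin_shift.
  assert (Hcos : 0 < cos s) by (apply cos_gt_0; lra).
  set (l := 3 * s / (3 - s^2)).
  assert (Hs2 : 0 < s^2 < 1) by (split; nra).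
  assert (Hls : s <= l) by (apply Rle_div_r; nra).
  assert (Htan : l <= sin s / cos s).
  { apply Rle_div_r; [exact Hcos|].
    replace (l * cos s) with (3 * s * cos s / (3 - s^2)) by (unfold l; field; lra).
    apply Rle_div_l; [lra|]. rewrite (Rmult_comm (sin s)). apply tan_lower_bound; lra. }
  replace ((PI/2 - s) * sin s / cos s) with ((PI/2 - s) * (sin s / cos s)) by (field; lra).
  apply Rle_trans with (phi (PI/2) (PI/2 - s) ((PI/2 - s) * l)).
  2: { apply phi_le_compat; [nra | split; [nra | apply Rmult_le_compat_l; lra]]. }
  set (hl := 15707/10000).
  apply Rle_trans with (phi hl (hl - s) ((hl - s) * l)).
  2: { apply phi_complement_le; unfold hl in *; try lra; nra. }
  assert (Hquartic : phi hl (hl - s) ((hl - s) * l)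
    = s^2 * (-9 + 6*hl*s + s^4 - 2*hl*s^3 + 9*(hl^2 - 2)*(hl - s)^2) / (3 - s^2)^2)
    by (unfold phi, l; field; lra).
  rewrite Hquartic.
  apply Rmult_le_pos; [| apply Rlt_le, Rinv_0_lt_compat; nra].
  apply Rmult_le_pos; [nra|]. unfold hl. nra.
Qed.

Lemma phi_cot_nonneg t : 0 < t < PI/2 -> 0 <= phi (PI/2) t (t * cos t / sin t).
Proof.
  intros Ht. destruct (Rle_lt_dec t 1).
  - apply phi_cot_nonneg_small; lra.
  - apply phi_cot_nonneg_large; lra.
Qed.

Definition psi2_gap (alpha c sigma : R) : R :=
  c * sigma^2 - (1 - alpha)^2 + 4 * sigma / PI - 4 * alpha / PI * atan (sigma / alpha).

Lemma psi2_gap_0 alpha c : psi2_gap alpha c 0 = - (1 - alpha)^2.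
Proof. unfold psi2_gap. rewrite Rdiv_0_l, atan_0. field. apply PI_neq0. Qed.

Lemma atan_sub_le u v : v <= u -> atan u - atan v <= u - v.
Proof.
  intros Hvu. destruct (Req_dec u v) as [-> | Hne]; [lra|].
  destruct (MVT_cor1 atan v u derivable_pt_atan ltac:(lra)) as [c [Hc _]].
  rewrite Hc, derive_pt_atan.
  assert (Hc2 : 0 <= c²) by apply Rle_0_sqr.
  assert (1 / (1 + c²) <= 1) by (apply Rle_div_l; lra).
  assert (0 <= 1 / (1 + c²)) by (apply Rlt_le, Rdiv_lt_0_compat; lra).
  nra.
Qed.

Lemma psi2_gap_le alpha c s1 s2 :
  0 < alpha -> 0 <= c -> 0 <= s1 <= s2 -> psi2_gap alpha c s1 <= psi2_gap alpha c s2.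
Proof.
  intros Ha Hc Hs. unfold psi2_gap.
  assert (Hpi := PI_RGT_0).
  assert (Hatan : atan (s2 / alpha) - atan (s1 / alpha) <= s2 / alpha - s1 / alpha)
    by (apply atan_sub_le; unfold Rdiv; apply Rmult_le_compat_r;
        [apply Rlt_le, Rinv_0_lt_compat |]; lra).
  assert (4 * alpha / PI * (atan (s2 / alpha) - atan (s1 / alpha))
          <= 4 * alpha / PI * (s2 / alpha - s1 / alpha))
    by (apply Rmult_le_compat_l; [apply Rlt_le, Rdiv_lt_0_compat |]; lra).
  assert (4 * alpha / PI * (s2 / alpha - s1 / alpha) = 4 * s2 / PI - 4 * s1 / PI)
    by (field; lra).
  assert (c * s1^2 <= c * s2^2) by (apply Rmult_le_compat_l; nra).
  lra.
Qed.

Lemma psi2_gap_continuous alpha c : continuity (psi2_gap alpha c).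
Proof.
  intros x. unfold psi2_gap.
  apply continuity_pt_minus; [reg|].
  apply continuity_pt_mult; [reg|].
  apply (continuity_pt_comp (fun sigma => sigma / alpha) atan); [reg|].
  apply derivable_continuous_pt, derivable_pt_atan.
Qed.

Lemma psi2_sq alpha sigma delta : 0 < alpha -> 0 < sigma ->
  psi2 alpha (sigma^2) delta
  = / delta * ((1 - alpha)^2 + sigma^2 - 4 * sigma / PI
               + 4 * alpha / PI * atan (sigma / alpha)).
Proof.
  intros Ha Hs. assert (Hpi := PI_RGT_0).
  unfold psi2, atan_ratio. rewrite sqrt_pow2 by lra.
  destruct (Req_EM_T sigma 0) as [| _]; [lra|].
  replace (alpha / sigma) with (/ (sigma / alpha)) by (field; lra).
  rewrite atan_inv by (apply Rdiv_lt_0_compat; lra).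
  f_equal. field. apply PI_neq0.
Qed.

Lemma psi2_fixed_point_iff alpha delta sigma : 0 < alpha -> 0 < sigma -> 0 < delta ->
  sigma^2 = psi2 alpha (sigma^2) delta <-> psi2_gap alpha (delta - 1) sigma = 0.
Proof.
  intros Ha Hs Hd. rewrite psi2_sq by assumption. unfold psi2_gap.
  split; intros H.
  - apply (Rmult_eq_compat_l delta) in H. rewrite <- Rmult_assoc, Rinv_r in H by lra. lra.
  - apply (Rmult_eq_reg_l delta); [| lra]. rewrite <- Rmult_assoc, Rinv_r by lra. lra.
Qed.

Lemma psi2_fixed_point_exists alpha delta : 0 < alpha < 1 -> 1 <= delta ->
  exists s, 0 <= s /\ s = psi2 alpha s delta.
Proof.
  intros Ha Hd. assert (Hpi := PI_RGT_0).
  assert (Hgap0 : psi2_gap alpha (delta - 1) 0 < 0).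
  { rewrite psi2_gap_0. nra. }
  (* [atan < PI/2] makes the gap at least [4 - 1 - 2] at [sigma = PI]. *)
  assert (HgapPI : 0 < psi2_gap alpha (delta - 1) PI).
  { unfold psi2_gap. destruct (atan_bound (PI / alpha)) as [_ Hat].
    assert (4 * alpha / PI * atan (PI / alpha) < 4 * alpha / PI * (PI / 2))
      by (apply Rmult_lt_compat_l; [apply Rdiv_lt_0_compat |]; lra).
    assert (4 * alpha / PI * (PI / 2) = 2 * alpha) by (field; lra).
    assert (4 * PI / PI = 4) by (field; lra).
    assert (0 <= (delta - 1) * PI^2) by (apply Rmult_le_pos; nra).
    nra. }
  destruct (IVT _ 0 PI (psi2_gap_continuous alpha (delta - 1)) Hpi Hgap0 HgapPI)
    as [sigma [Hsigma Hzero]].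
  assert (Hpos : 0 < sigma) by (destruct (Req_dec sigma 0) as [-> | ]; lra).
  exists (sigma^2). split; [nra|].
  apply psi2_fixed_point_iff; lra.
Qed.

Lemma F2_fixed_point alpha delta : 0 < alpha < 1 -> 1 <= delta ->
  0 <= F2 alpha delta /\ F2 alpha delta = psi2 alpha (F2 alpha delta) delta.
Proof.
  intros Ha Hd. unfold F2.
  apply epsilon_spec, psi2_fixed_point_exists; assumption.
Qed.

Lemma psi2_fixed_point_lt alpha delta sigma1 s :
  0 < alpha -> 1 <= delta -> 0 <= sigma1 -> 0 < psi2_gap alpha (delta - 1) sigma1 ->
  0 <= s -> s = psi2 alpha s delta -> s < sigma1^2.
Proof.
  intros Ha Hd Hs1 Hgap Hs Hfix.
  assert (Hs1pos : 0 < sigma1).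
  { destruct (Req_dec sigma1 0) as [Hz | ]; [| lra].
    rewrite Hz, psi2_gap_0 in Hgap. pose proof (pow2_ge_0 (1 - alpha)). lra. }
  destruct (Req_dec s 0) as [-> | Hsnz]; [nra|].
  set (sigma := sqrt s).
  assert (Hsigma : 0 < sigma) by (apply sqrt_lt_R0; lra).
  assert (Hsq : sigma^2 = s) by (unfold sigma; apply pow2_sqrt; lra).
  rewrite <- Hsq in Hfix |- *.
  apply psi2_fixed_point_iff in Hfix; [| lra | lra | lra].
  destruct (Rlt_or_le sigma sigma1) as [Hlt | Hge]; [nra|].
  assert (psi2_gap alpha (delta - 1) sigma1 <= psi2_gap alpha (delta - 1) sigma)
    by (apply psi2_gap_le; lra).
  lra.
Qed.

Lemma F1inv_sq alpha : F1inv alpha = (alpha / tan (PI * alpha / 2))^2.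
Proof. unfold F1inv, Rdiv. ring. Qed.

Lemma psi2_gap_cot alpha c : 0 < alpha < 1 ->
  let t := PI * alpha / 2 in
  psi2_gap alpha c (alpha / tan t)
  = phi (PI/2) t (t * cos t / sin t) / (PI/2)^2
    + (c - ((PI/2)^2 - 2)) * (alpha / tan t)^2.
Proof.
  intros Ha t. assert (Hpi := PI_RGT_0).
  assert (Ht : 0 < t < PI/2) by (unfold t; split; nra).
  assert (Hsin : 0 < sin t) by (apply sin_gt_0; lra).
  assert (Hcos : 0 < cos t) by (apply cos_gt_0; lra).
  assert (Htan : 0 < tan t) by (apply tan_gt_0; lra).
  unfold psi2_gap.
  replace (alpha / tan t / alpha) with (/ tan t) by (field; lra).
  rewrite atan_inv, atan_tan by lra.
  unfold phi, tan, t. field.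
  split; [| split]; [exact (Rgt_not_eq _ _ Hcos) | exact (Rgt_not_eq _ _ Hsin) | apply PI_neq0].
Qed.

Theorem mainTheorem19 (delta : R) :
  delta > PI ^ 2 / 4 - 1 ->
  forall alpha : R, 0 < alpha < 1 -> F1inv alpha > F2 alpha delta.
Proof.
  intros Hdelta alpha Ha.
  assert (Hpi := PI_bounds).
  assert (Hexcess : 0 < delta - 1 - ((PI/2)^2 - 2)) by lra.
  assert (Hd : 1 <= delta) by nra.
  set (t := PI * alpha / 2).
  assert (Ht : 0 < t < PI/2) by (unfold t; split; nra).
  assert (Hsigma1 : 0 < alpha / tan t) by (apply Rdiv_lt_0_compat; [lra | apply tan_gt_0; lra]).
  assert (Hgap : 0 < psi2_gap alpha (delta - 1) (alpha / tan t)).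
  { rewrite psi2_gap_cot by assumption. fold t.
    assert (0 <= phi (PI/2) t (t * cos t / sin t) / (PI/2)^2)
      by (apply Rle_div_r; [nra | rewrite Rmult_0_l; apply phi_cot_nonneg; lra]).
    assert (0 < (delta - 1 - ((PI/2)^2 - 2)) * (alpha / tan t)^2)
      by (apply Rmult_lt_0_compat; [lra | apply pow_lt; lra]).
    lra. }
  destruct (F2_fixed_point alpha delta Ha Hd) as [Hnonneg Hfix].
  rewrite F1inv_sq. fold t.
  apply (psi2_fixed_point_lt alpha delta); lra.
Qed.
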